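(* In the stochastic extra-momentum scheme (defined in the context), choose $\theta=\frac18$, $\alpha=\frac1{4L}$, $\tau=\frac{\alpha}{1+\theta/\kappa}$, $\gamma=\frac{1}{8(\kappa+\theta)}$. Then for every $k\ge0$, $$\mathbb E\big[\|z^k-z^*\|^2\big]\le2\Big(1-\frac1{8\kappa+1}\Big)^k\|z^0-z^*\|^2+\frac{128\sigma^2}{\mu(8L+\mu)}+\frac{4\delta^2}{\mu^2}.$$
   Context: Let $\mathcal Z\subseteq\mathbb R^n$ be a nonempty closed convex set. Let $F:\mathcal Z\to\mathbb R^n$ satisfy $(F(z)-F(z'))^\top(z-z')\ge\mu\|z-z'\|^2$ and $\|F(z)-F(z')\|\le L\|z-z'\|$ for all $z,z'\in\mathcal Z$, where $0<\mu\le L$; $\kappa=L/\mu$. Let $z^*$ be the unique point of $\mathcal Z$ with $F(z^* )^\top(z-z^* )\ge 0$ for all $z\in\mathcal Z$. $P_{\mathcal Z}$ denotes Euclidean projection onto $\mathcal Z$. A stochastic oracle returns $\hat F(z,\xi)$ for a random sample $\xi$, and satisfies, for every $z\in\mathcal Z$, $\mathbb E_\xi\|\hat F(z,\xi)-F(z)\|\le\delta$ and $\mathbb E_\xi\|\hat F(z,\xi)-F(z)\|^2\le\sigma^2$ for constants $\delta,\sigma\ge0$. Each oracle call $\hat F(z^j)$ means $\hat F(z^j,\xi^j)$ with a fresh sample independent of all previous samples. The stochastic extra-momentum scheme: starting from $z^0\in\mathcal Z$ with $z^{-1}:=z^0$ and $\hat F(z^{-1}):=\hat F(z^0)$, for $k\ge0$,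 $z^{k+1}=P_{\mathcal Z}(z^k-\alpha\hat F(z^k)+\gamma(z^k-z^{k-1})-\tau(\hat F(z^k)-\hat F(z^{k-1})))$. *)

From mathcomp Require Import all_boot all_order all_algebra.
From mathcomp Require Import all_classical all_reals all_analysis.
Set Implicit Arguments. Unset Strict Implicit. Unset Printing Implicit Defensive.
Import Order.TTheory GRing.Theory Num.Theory.
Local Open Scope classical_set_scope.
Local Open Scope ring_scope.

Section Defs.
Variables (R : realType) (n : nat).
Notation vec := 'rV[R]_n.

Definition dotv (u v : vec) : R := \sum_(i < n) u 0 i * v 0 i.
Definition enorm (u : vec) : R := Num.sqrt (dotv u u).

(** Closedness for the Euclidean (= product) topology of R^n. *)
Definition eclosed (Z : set vec) : Prop := closed (Z : set 'rV[R^o]_n).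

Definition em_convex_set (Z : set vec) : Prop :=
  forall x y, Z x -> Z y -> forall t : R, 0 <= t <= 1 -> Z (t *: x + (1 - t) *: y).

Definition em_is_proj (Z : set vec) (P : vec -> vec) : Prop :=
  forall x, Z (P x) /\ forall y, Z y -> enorm (x - P x) <= enorm (x - y).

Definition is_VI_sol (Z : set vec) (F : vec -> vec) (zs : vec) : Prop :=
  Z zs /\ forall z, Z z -> 0 <= dotv (F zs) (z - zs).

Definition em_strongly_monotone (Z : set vec) (F : vec -> vec) (mu : R) : Prop :=
  forall z z', Z z -> Z z' -> mu * enorm (z - z') ^+ 2 <= dotv (F z - F z') (z - z').

Definition em_lipschitz_on (Z : set vec) (F : vec -> vec) (L : R) : Prop :=
  forall z z', Z z -> Z z' -> enorm (F z - F z') <= L * enorm (z - z').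

Definition rectangles d (Xi : measurableType d) : set (set ('rV[R^o]_n * Xi)) :=
  [set A `*` B | A in [set A : set 'rV[R^o]_n | open A]
               & B in [set B : set Xi | measurable B]].

(** Joint measurability of the oracle (z, xi) |-> Fhat z xi, w.r.t.
    Borel(R^n) (x) (sigma-algebra of Xi), coordinatewise. *)
Definition oracle_measurable d (Xi : measurableType d) (Fhat : vec -> Xi -> vec) : Prop :=
  forall i : 'I_n,
    measurable_fun setT
      (fun p : g_sigma_algebraType (@rectangles d Xi) => Fhat p.1 p.2 0 i : R).

(** The stochastic extra-momentum scheme driven by the sample sequence s
    (s j = xi^j, the sample used by the j-th oracle call, at z^j).
    em_traj s k = (z^k, z^(k-1)), with z^(-1) = z^0; the oracle value
    Fhat(z^(k-1)) is the one computed at step k-1 (same sample s (k-1)),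
    and Fhat(z^(-1)) := Fhat(z^0). *)
Fixpoint em_traj d (Xi : measurableType d) (Fhat : vec -> Xi -> vec)
    (P : vec -> vec) (alpha gamma tau : R) (z0 : vec) (s : nat -> Xi) (k : nat)
    : vec * vec :=
  match k with
  | 0 => (z0, z0)
  | k'.+1 =>
      let (zk, zkm1) := em_traj Fhat P alpha gamma tau z0 s k' in
      let gk := Fhat zk (s k') in
      let gkm1 := if k' is k''.+1 then Fhat zkm1 (s k'') else gk in
      (P (zk - alpha *: gk + gamma *: (zk - zkm1) - tau *: (gk - gkm1)), zk)
  end.

Definition em_iter d (Xi : measurableType d) (Fhat : vec -> Xi -> vec)
    (P : vec -> vec) (alpha gamma tau : R) (z0 : vec) (s : nat -> Xi) (k : nat) : vec :=
  (em_traj Fhat P alpha gamma tau z0 s k).1.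

End Defs.

Definition upd (X : Type) (s : nat -> X) (j : nat) (x : X) : nat -> X :=
  fun i => if i == j then x else s i.

(** Expectation over the first m samples xi^0, ..., xi^(m-1), drawn
    independently from the probability P (fresh samples): iterated integral
    E[f] = int dP(xi^0) ... int dP(xi^(m-1)) f(xi^0, ..., xi^(m-1)).
    The remaining coordinates of s are irrelevant for f depending only on
    the first m samples. *)
Local Open Scope ereal_scope.
Fixpoint iexp d (Xi : measurableType d) (R : realType) (P : probability Xi R)
    (m : nat) (f : (nat -> Xi) -> \bar R) (s : nat -> Xi) : \bar R :=
  match m with
  | 0 => f s
  | m'.+1 => iexp P m' (fun s' => \int[P]_x f (upd s' m' x)) s
  end.

(** With c = mu / (8 L) = theta / kappa the step sizes are alpha = 2c/mu,
    tau = alpha/(1+c) and gamma = c/(1+c).  Write zs for the solution,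
    beta = 2c/(1+c) and G z = F z - F zs - (mu/2)(z - zs).  The Lyapunov function
      V(z, z', g') = (1 + beta) |z - zs|^2 - 2 tau <G z - G z' - (g' - F z'), z - zs>
                     + |z - z'|^2 / 4 + 8 tau^2 |g' - F z'|^2
    satisfies, along the iterates,
      (1 + c) V_(k+1) <= V_k - (beta + c) |z_k - zs|^2 + (terms in the oracle error at z_k):
    the difference is a sum of squares plus nonnegative multiples of the
    projection inequality, the variational inequality and strong monotonicity.
    Integrating over the fresh sample xi_k, the error terms are bounded through
    delta and sigma (Young's inequality absorbs the cross term into
    (beta + c) |z_k - zs|^2), so E V_(k+1) <= lambda E V_k + const with
    lambda = 1/(1+c) = 1 - 1/(8 kappa + 1).  Unrolling this recursion and using
    V >= (5/8) |z - zs|^2 gives the bound. *)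

From mathcomp Require Import all_boot all_order all_algebra.
From mathcomp Require Import all_classical all_reals all_analysis.
From mathcomp Require Import measurable_realfun ring lra.
Import Order.TTheory GRing.Theory Num.Theory.
Set Implicit Arguments. Unset Strict Implicit. Unset Printing Implicit Defensive.
Local Open Scope classical_set_scope.
Local Open Scope ring_scope.

(** Reduces an identity between linear combinations of inner products to an
    identity between the coordinates. *)
Ltac dotv_coords :=
  apply/eqP; rewrite -subr_eq0; apply/eqP;
  rewrite /dotv ?(mulrDr, mulrBr, mulrN, mulNr, opprD, opprK, mulr_sumr);
  rewrite -?sumrN -?big_split /=;
  apply: big1 => i _; rewrite !mxE.

Section Euclidean.
Variables (R : realType) (n : nat).
Local Notation vec := 'rV[R]_n.

Definition sqnorm (u : vec) : R := dotv u u.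

Lemma sqnorm_ge0 (u : vec) : 0 <= sqnorm u.
Proof. by apply: sumr_ge0 => i _; rewrite -expr2 sqr_ge0. Qed.

Lemma enorm_ge0 (u : vec) : 0 <= enorm u.
Proof. exact: sqrtr_ge0. Qed.

Lemma enorm_sqr (u : vec) : enorm u ^+ 2 = sqnorm u.
Proof. by rewrite sqr_sqrtr // sqnorm_ge0. Qed.

Lemma sqnorm_eq0 (u : vec) : sqnorm u = 0 -> u = 0.
Proof.
move=> /eqP; rewrite psumr_eq0 => [/allP u0|i _]; last by rewrite -expr2 sqr_ge0.
apply/rowP => i; rewrite mxE.
by have := u0 i (mem_index_enum _); rewrite mulf_eq0 orbb => /eqP.
Qed.

Lemma dotvC (u v : vec) : dotv u v = dotv v u.
Proof. by apply: eq_bigr => i _; rewrite mulrC. Qed.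

Lemma dotv0l (v : vec) : dotv 0 v = 0.
Proof. by apply: big1 => i _; rewrite mxE mul0r. Qed.

Lemma dotvNr (u v : vec) : dotv u (- v) = - dotv u v.
Proof. by dotv_coords; ring. Qed.

Lemma enormN (u : vec) : enorm (- u) = enorm u.
Proof. by congr Num.sqrt; dotv_coords; ring. Qed.

Lemma dotv_le_enormM (u v : vec) : dotv u v <= enorm u * enorm v.
Proof.
have [->|u0] := eqVneq u 0; first by rewrite dotv0l mulr_ge0 ?enorm_ge0.
have [->|v0] := eqVneq v 0; first by rewrite dotvC dotv0l mulr_ge0 ?enorm_ge0.
set a := enorm u; set b := enorm v.
have a0 : 0 < a.
  by rewrite lt0r enorm_ge0 andbT; apply: contra_neq u0 => /(congr1 (fun x => x ^+ 2));
  rewrite enorm_sqr expr0n => /sqnorm_eq0.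
have b0 : 0 < b.
  by rewrite lt0r enorm_ge0 andbT; apply: contra_neq v0 => /(congr1 (fun x => x ^+ 2));
  rewrite enorm_sqr expr0n => /sqnorm_eq0.
have := sqnorm_ge0 (b *: u - a *: v).
have -> : sqnorm (b *: u - a *: v) =
    b ^+ 2 * sqnorm u - 2 * a * b * dotv u v + a ^+ 2 * sqnorm v by dotv_coords; ring.
have ab0 := mulr_gt0 a0 b0; rewrite -!enorm_sqr -/a -/b; nra.
Qed.

Lemma le0_of_le_scaled (a b : R) :
  0 <= b -> (forall t, 0 < t <= 1 -> a <= t * b) -> a <= 0.
Proof.
move=> b0 le_ab; rewrite leNgt; apply/negP => a0.
have ab0 : 0 < a + b by lra.
have := le_ab (a / (a + b)); rewrite divr_gt0 // ler_pdivrMr // mul1r lerDl b0.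
by rewrite mulrAC ler_pdivlMr // => /(_ isT); nra.
Qed.

Lemma proj_obtuse (Z : set vec) (P : vec -> vec) (y z : vec) :
  em_convex_set Z -> em_is_proj Z P -> Z z -> dotv (y - P y) (z - P y) <= 0.
Proof.
move=> cvxZ projP Zz; have [ZPy Pmin] := projP y.
set p := P y; set u := y - p; set v := z - p.
suff : 2 * dotv u v <= 0 by lra.
apply: (le0_of_le_scaled (sqnorm_ge0 v)) => t /andP[t0 t1].
have Zt : Z (t *: z + (1 - t) *: p) by apply: cvxZ => //; rewrite ltW.
have : sqnorm u <= sqnorm (u - t *: v).
  have -> : u - t *: v = y - (t *: z + (1 - t) *: p).
    by apply/rowP => i; rewrite !mxE; ring.
  by have := Pmin _ Zt; rewrite ler_sqrt // sqnorm_ge0.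
have -> : sqnorm (u - t *: v) = sqnorm u - 2 * t * dotv u v + t ^+ 2 * sqnorm v.
  by dotv_coords; ring.
by move=> le_u; rewrite -(ler_pM2l t0); nra.
Qed.

Lemma sqnorm_sub_halfZ_le (a b : vec) (mu K : R) :
  0 <= mu -> mu * sqnorm b <= dotv a b -> sqnorm a <= K ->
  sqnorm (a - (mu / 2) *: b) <= K.
Proof.
move=> mu0 sm_ab le_aK.
have -> : sqnorm (a - (mu / 2) *: b) =
    sqnorm a - mu * dotv a b + (mu / 2) ^+ 2 * sqnorm b by dotv_coords; field.
have := sqnorm_ge0 b; nra.
Qed.

End Euclidean.

Section StepSizes.
Variables (R : realType) (mu c : R).

Definition em_alpha := 2 * c / mu.
Definition em_tau := em_alpha / (1 + c).
Definition em_gamma := c / (1 + c).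
Definition em_beta := 2 * c / (1 + c).
Definition em_err_weight := 8 * em_tau ^+ 2.
Definition em_err_gain := (2 + c) * em_err_weight.

Hypotheses (mu0 : 0 < mu) (c0 : 0 < c).

Lemma em_tau_ge0 : 0 <= em_tau.
Proof. by rewrite divr_ge0 ?divr_ge0 ?mulr_ge0 ?addr_ge0 ?ltW. Qed.

Lemma em_beta_ge0 : 0 <= em_beta.
Proof. by rewrite divr_ge0 ?mulr_ge0 ?addr_ge0 ?ltW. Qed.

Lemma em_err_weight_ge0 : 0 <= em_err_weight.
Proof. by rewrite mulr_ge0 ?sqr_ge0. Qed.

Lemma em_err_gain_ge0 : 0 <= em_err_gain.
Proof. by rewrite mulr_ge0 ?em_err_weight_ge0 ?addr_ge0 ?ltW. Qed.

(** The unrolled bound, with q = lambda^K, reduced to the constants of the theorem. *)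
Lemma em_constants_le (q N sg dl : R) : c <= 1 / 8 -> 0 <= q -> 0 <= N ->
  (q * ((1 - c) * N + (em_err_gain + em_err_weight) * sg ^+ 2)
   + (em_err_gain * sg ^+ 2 + em_tau ^+ 2 * dl ^+ 2 / (em_beta + c)) / c * (1 - q * (1 + c)))
  / (5 / 8)
  <= 2 * q * N + 128 * c * sg ^+ 2 / (mu ^+ 2 * (1 + c)) + 4 * dl ^+ 2 / mu ^+ 2.
Proof.
move=> c8 q0 N0.
have c1 : 0 < 1 + c by rewrite addr_gt0.
have c3 : 0 < 3 + c by rewrite addr_gt0.
pose w := (mu ^+ 2)^-1; pose p := (1 + c)^-1.
have w0 : 0 <= w by rewrite invr_ge0 exprn_ge0 // ltW.
have p0 : 0 < p by rewrite invr_gt0.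
have p1 : p <= 1 by rewrite invf_le1 // lerDl ltW.
have pc : (2 + c) * p = 1 + p by rewrite /p; field; rewrite lt0r_neq0.
(* distance, variance and bias contributions *)
rewrite [leLHS](_ : _ = 8 / 5 * (q * N) - 8 / 5 * (q * N * c)
    + (sg ^+ 2 * w * c * p) * (8 / 5 * (32 * ((2 + c) * p)) - 8 / 5 * (64 * (q * p)))
    + (dl ^+ 2 * w) * (8 / 5 * (4 * p / (3 + c) * (1 - q * (1 + c))))); last first.
  rewrite /w /p /em_err_gain /em_err_weight /em_tau /em_alpha /em_beta; field.
  by rewrite !lt0r_neq0 // ?addr_gt0 ?mulr_gt0.
rewrite [leRHS](_ : _ = 2 * (q * N) + (sg ^+ 2 * w * c * p) * 128 + (dl ^+ 2 * w) * 4); last first.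
  by rewrite /w /p; field; rewrite !lt0r_neq0 // exprn_gt0.
rewrite !lerD //.
- have qN0 : 0 <= q * N by rewrite mulr_ge0.
  have qNc0 : 0 <= q * N * c by rewrite mulr_ge0 // ltW.
  by move: qN0 qNc0; nra.
- apply: ler_wpM2l.
    by apply: mulr_ge0; [apply: mulr_ge0; [apply: mulr_ge0 => //; exact: sqr_ge0|]|]; exact: ltW.
  have qp0 : 0 <= q * p by rewrite mulr_ge0 // ltW.
  by rewrite pc; move: p1 qp0; generalize p (q * p) => X Y; lra.
- apply: ler_wpM2l; first by apply: mulr_ge0 => //; exact: sqr_ge0.
  have v0 : 0 <= 4 * p / (3 + c) by rewrite divr_ge0 ?mulr_ge0 ?ltW.
  have v1 : 4 * p / (3 + c) <= 4 / 3.
    by rewrite ler_pdivrMr // mulrDr; move: (ltW c0) p1; generalize p c => X Y; lra.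
  have u1 : 1 - q * (1 + c) <= 1 by rewrite lerBlDr lerDl mulr_ge0 // ltW.
  by move: v0 v1 u1; generalize (4 * p / (3 + c)) (1 - q * (1 + c)) => X Y; nra.
Qed.

End StepSizes.

Section Lyapunov.
Variables (R : realType) (n : nat).
Local Notation vec := 'rV[R]_n.
Variables (F : vec -> vec) (zs : vec) (mu c L : R).

Local Notation G z := ((F z - F zs) - (mu / 2) *: (z - zs)).

Definition em_lyap (z zp gp : vec) : R :=
  (1 + em_beta c) * sqnorm (z - zs)
  - 2 * em_tau mu c * dotv (G z - G zp - (gp - F zp)) (z - zs)
  + 1 / 4 * sqnorm (z - zp) + em_err_weight mu c * sqnorm (gp - F zp).

Hypotheses (mu0 : 0 < mu) (c0 : 0 < c) (c8 : c <= 1 / 8) (L0 : 0 < L).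
Hypothesis tauL : em_tau mu c * L <= 1 / 4.

Lemma em_lyap_step (z zp z' g gp : vec) :
  let y := z - em_alpha mu c *: g + em_gamma c *: (z - zp) - em_tau mu c *: (g - gp) in
  0 <= dotv (y - z') (z' - zs) ->
  0 <= dotv (F zs) (z' - zs) ->
  mu * sqnorm (z' - zs) <= dotv (F z' - F zs) (z' - zs) ->
  mu * sqnorm (z - zp) <= dotv (F z - F zp) (z - zp) ->
  sqnorm (F z - F zp) <= L ^+ 2 * sqnorm (z - zp) ->
  (1 + c) * em_lyap z' z g <= em_lyap z zp gp - (em_beta c + c) * sqnorm (z - zs)
    - 2 * em_tau mu c * dotv (g - F z) (z - zs) + em_err_gain mu c * sqnorm (g - F z).
Proof.
move=> y proj_y sol_zs sm_z' sm_z lip_z.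
set w := (F z - F zp) - (mu / 2) *: (z - zp).
have lip_w : 0 <= L ^+ 2 * sqnorm (z - zp) - sqnorm w.
  by rewrite subr_ge0 sqnorm_sub_halfZ_le // ltW.
have sm_z'0 : 0 <= dotv (F z' - F zs) (z' - zs) - mu * sqnorm (z' - zs) by rewrite subr_ge0.
have alpha0 : 0 <= 2 * em_alpha mu c by rewrite !mulr_ge0 ?invr_ge0 ?ltW.
have tauL0 : 0 <= em_tau mu c / L by rewrite divr_ge0 ?em_tau_ge0 ?ltW.
set r1 := 1 / 2 - 5 / 4 * c - em_tau mu c * L.
set r2 := 1 / 4 - em_tau mu c * L.
have r10 : 0 <= r1 by rewrite /r1; have := c8; have := tauL; lra.
have r20 : 0 <= r2 by rewrite /r2; have := tauL; lra.
(* the gap is a nonnegative combination of the hypotheses and four squares *)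
have -> : (1 + c) * em_lyap z' z g = em_lyap z zp gp - (em_beta c + c) * sqnorm (z - zs)
    - 2 * em_tau mu c * dotv (g - F z) (z - zs) + em_err_gain mu c * sqnorm (g - F z)
  - (2 * dotv (y - z') (z' - zs) + 2 * em_alpha mu c * dotv (F zs) (z' - zs)
    + 2 * em_alpha mu c * (dotv (F z' - F zs) (z' - zs) - mu * sqnorm (z' - zs))
    + em_tau mu c / L * ((L ^+ 2 * sqnorm (z - zp) - sqnorm w) + sqnorm (w + L *: (z' - z)))
    + 1 / 8 * (sqnorm ((8 * em_tau mu c) *: (gp - F zp) - (z' - z))
               + sqnorm ((8 * em_tau mu c) *: (g - F z) + (z' - z)))
    + r2 * sqnorm (z - zp) + r1 * sqnorm (z' - z)).
  rewrite /em_lyap /em_err_gain /em_err_weight /r1 /r2 /w /y /sqnorm.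
  dotv_coords; rewrite /em_tau /em_alpha /em_gamma /em_beta; field.
  by rewrite !lt0r_neq0 // addr_gt0.
rewrite gerBl; repeat apply: addr_ge0;
  try (apply: mulr_ge0 => //; try apply: addr_ge0 => //; exact: sqnorm_ge0).
Qed.

Lemma em_lyap_lower (z zp gp : vec) :
  mu * sqnorm (z - zp) <= dotv (F z - F zp) (z - zp) ->
  sqnorm (F z - F zp) <= L ^+ 2 * sqnorm (z - zp) ->
  (5 / 8 + em_beta c) * sqnorm (z - zs) <= em_lyap z zp gp.
Proof.
move=> sm_z lip_z.
set w := (F z - F zp) - (mu / 2) *: (z - zp).
have lip_w : 0 <= L ^+ 2 * sqnorm (z - zp) - sqnorm w.
  by rewrite subr_ge0 sqnorm_sub_halfZ_le // ltW.
have tauL0 : 0 <= em_tau mu c / L by rewrite divr_ge0 ?em_tau_ge0 ?ltW.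
set r2 := 1 / 4 - em_tau mu c * L.
have r20 : 0 <= r2 by rewrite /r2; have := tauL; lra.
have -> : em_lyap z zp gp = (5 / 8 + em_beta c) * sqnorm (z - zs)
   + (em_tau mu c / L * (sqnorm (w - L *: (z - zs)) + (L ^+ 2 * sqnorm (z - zp) - sqnorm w))
   + 1 / 8 * sqnorm ((8 * em_tau mu c) *: (gp - F zp) + (z - zs))
   + r2 * (sqnorm (z - zs) + sqnorm (z - zp))).
  rewrite /em_lyap /em_err_weight /r2 /w /sqnorm.
  dotv_coords; rewrite /em_tau /em_alpha /em_beta; field.
  by rewrite !lt0r_neq0 // addr_gt0.
rewrite lerDl; repeat apply: addr_ge0;
  try (apply: mulr_ge0 => //; try apply: addr_ge0 => //; exact: sqnorm_ge0).
Qed.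

Lemma em_lyap_diag (z g : vec) :
  em_lyap z z g - (em_beta c + c) * sqnorm (z - zs)
    - 2 * em_tau mu c * dotv (g - F z) (z - zs) + em_err_gain mu c * sqnorm (g - F z)
  = (1 - c) * sqnorm (z - zs) + (em_err_gain mu c + em_err_weight mu c) * sqnorm (g - F z).
Proof.
rewrite /em_lyap /em_err_gain /em_err_weight /sqnorm.
dotv_coords; rewrite /em_tau /em_alpha /em_beta; field.
by rewrite !lt0r_neq0 // addr_gt0.
Qed.

End Lyapunov.

Section OracleMeasurability.
Variables (R : realType) (n : nat) (d : measure_display) (Xi : measurableType d).
Local Notation vec := 'rV[R]_n.

Lemma measurable_pairl (z : vec) :
  measurable_fun setT (fun x : Xi => (z, x) : g_sigma_algebraType (@rectangles R n d Xi)).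
Proof.
apply: (@measurability _ _ Xi (g_sigma_algebraType (@rectangles R n d Xi)) setT _
  (@rectangles R n d Xi)) => //.
move=> _ [_ [A oA [B mB <-]] <-].
have [Az|nAz] := pselect (A z).
  suff -> : setT `&` (fun x : Xi => (z, x)) @^-1` (A `*` B) = B by [].
  by apply/seteqP; split => x /=; [case=> _ []|move=> Bx; split=> //].
suff -> : setT `&` (fun x : Xi => (z, x)) @^-1` (A `*` B) = set0 by [].
by apply/seteqP; split => x //=; case=> _ [].
Qed.

Lemma measurable_oracle_error (Fhat : vec -> Xi -> vec) (F : vec -> vec) (z : vec) :
  oracle_measurable Fhat -> measurable_fun setT (fun x => enorm (Fhat z x - F z)).
Proof.
move=> mFhat; rewrite /enorm /dotv.
apply: (measurableT_comp (f := @Num.sqrt R)).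
  by apply: measurable_realfun.continuous_measurable_fun; exact: sqrt_continuous.
apply: measurable_sum => i /=.
under eq_fun do rewrite !mxE.
have mFhat_i : measurable_fun setT (fun x => Fhat z x 0 i).
  exact: measurableT_comp (mFhat i) (measurable_pairl z).
by apply: measurable_realfun.measurable_funM; apply: measurable_realfun.measurable_funB.
Qed.

End OracleMeasurability.

Section IteratedExpectation.
Variables (R : realType) (d : measure_display) (Xi : measurableType d).
Context {P : probability Xi R}.
Local Open Scope ereal_scope.

(** No measurability is needed: for nonnegative functions the integral is a
    supremum over the simple functions below the integrand. *)
Lemma ge0_le_integral_nonmeasurable (f g : Xi -> \bar R) :
  (forall x, 0 <= f x) -> (forall x, f x <= g x) ->
  \int[P]_x f x <= \int[P]_x g x.
Proof.
move=> f0 fg; rewrite !ge0_integralTE // => [|x]; last exact: le_trans (f0 x) (fg x).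
apply: ereal_sup_le => _ [h hf <-]; exists h => //= x; exact: le_trans (hf x) (fg x).
Qed.

Lemma iexpS m (f : (nat -> Xi) -> \bar R) s :
  iexp P m.+1 f s = iexp P m (fun s' => \int[P]_x f (upd s' m x)) s.
Proof. by []. Qed.

Lemma le_iexp m (f g : (nat -> Xi) -> \bar R) s :
  (forall s, 0 <= f s) -> (forall s, f s <= g s) -> iexp P m f s <= iexp P m g s.
Proof.
elim: m f g s => [|m IH] f g s f0 fg /=; first exact: fg.
apply: IH => s'; first by apply: integral_ge0 => x _.
exact: ge0_le_integral_nonmeasurable.
Qed.

Lemma integral_quadratic_le (f : Xi -> R) (a b c dl sg : R) :
  measurable_fun setT f -> (forall x, 0 <= f x)%R ->
  (0 <= a)%R -> (0 <= b)%R -> (0 <= c)%R ->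
  \int[P]_x (f x)%:E <= dl%:E -> \int[P]_x (f x ^+ 2)%:E <= sg%:E ->
  \int[P]_x (a + b * f x + c * f x ^+ 2)%:E <= (a + b * dl + c * sg)%:E.
Proof.
move=> mf f0 a0 b0 c0 int_f int_f2.
have mfE : measurable_fun setT (EFin \o f) by apply/measurable_EFinP.
have mf2E : measurable_fun setT (EFin \o (fun x => f x ^+ 2)%R).
  by apply/measurable_EFinP; exact: measurable_funX.
under eq_integral do rewrite EFinD EFinD (EFinM b) (EFinM c).
do 2 (rewrite ge0_integralD //;
  try (by move=> x _; rewrite ?adde_ge0 ?mule_ge0 // lee_fin ?exprn_ge0);
  try (by apply: emeasurable_funD => //; exact: measurable_funeM);
  try exact: measurable_funeM).
rewrite ge0_integralZl_EFin // => [|x _]; last by rewrite lee_fin.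
rewrite ge0_integralZl_EFin // => [|x _]; last by rewrite lee_fin exprn_ge0.
rewrite integral_cst // -[X in a%:E * X]/(P [set: Xi]) probability_setT mule1 !EFinD !EFinM.
by rewrite !leeD // lee_wpmul2l // lee_fin.
Qed.

End IteratedExpectation.

Section Trajectory.
Variables (R : realType) (n : nat) (d : measure_display) (Xi : measurableType d).
Local Notation vec := 'rV[R]_n.
Context {Fhat : vec -> Xi -> vec} {P : vec -> vec} {a g t : R} {z0 : vec}.
Local Notation T s k := (em_traj Fhat P a g t z0 s k).

Lemma em_trajS s k : T s k.+1 =
  let z := (T s k).1 in let zp := (T s k).2 in
  let gk := Fhat z (s k) in
  let gkm1 := if k is k'.+1 then Fhat zp (s k') else gk in
  (P (z - a *: gk + g *: (z - zp) - t *: (gk - gkm1)), z).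
Proof. by rewrite /=; case: (T s k). Qed.

Lemma em_traj_snd s k : (T s k.+1).2 = (T s k).1.
Proof. by rewrite em_trajS. Qed.

Lemma em_traj_fstSS s k : (T s k.+2).1 =
  P ((T s k.+1).1 - a *: Fhat (T s k.+1).1 (s k.+1) + g *: ((T s k.+1).1 - (T s k.+1).2)
     - t *: (Fhat (T s k.+1).1 (s k.+1) - Fhat (T s k.+1).2 (s k))).
Proof. by rewrite em_trajS. Qed.

Lemma em_traj_prefix s s' k : (forall i, (i < k)%N -> s i = s' i) -> T s k = T s' k.
Proof.
elim: k => [//|k IH] ss'.
rewrite !em_trajS IH => [|i ik]; last by rewrite ss' // ltnW.
by rewrite ss' //; case: k {IH} ss' => [//|k] ss'; rewrite ss' // ltnW.
Qed.

Lemma em_traj_in (Z : set vec) s k :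
  Z z0 -> em_is_proj Z P -> Z (T s k).1 /\ Z (T s k).2.
Proof.
move=> Zz0 projP; elim: k => [//|k [Zz Zzp]].
by rewrite em_trajS; split => //; exact: (projP _).1.
Qed.

End Trajectory.

Lemma young_sqr (R : realType) (k r t x : R) :
  0 < k -> - (k * r ^+ 2) + 2 * t * r * x <= t ^+ 2 * x ^+ 2 / k.
Proof. by move=> k0; rewrite ler_pdivlMr //; have := sqr_ge0 (k * r - t * x); nra. Qed.

Section Main.
Variables (R : realType) (n : nat).
Local Notation vec := 'rV[R]_n.
Variables (Z : set vec) (F : vec -> vec) (mu L : R) (d : measure_display) (Xi : measurableType d)
  (Pr : probability Xi R) (Fhat : vec -> Xi -> vec) (delta sigma : R) (Proj : vec -> vec)
  (zs z0 : vec).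
Hypothesis cvxZ : em_convex_set Z.
Hypotheses (mu0 : 0 < mu) (muL : mu <= L).
Hypothesis smF : em_strongly_monotone Z F mu.
Hypothesis lipF : em_lipschitz_on Z F L.
Hypothesis solzs : is_VI_sol Z F zs.
Hypothesis projP : em_is_proj Z Proj.
Hypothesis measFhat : oracle_measurable Fhat.
Hypothesis int_err : forall z, Z z ->
  (\int[Pr]_x (enorm (Fhat z x - F z))%:E <= delta%:E)%E.
Hypothesis int_err2 : forall z, Z z ->
  (\int[Pr]_x (enorm (Fhat z x - F z) ^+ 2)%:E <= (sigma ^+ 2)%:E)%E.
Hypothesis Zz0 : Z z0.

Definition em_c := mu / (8 * L).

Let L0 : 0 < L. Proof. exact: lt_le_trans mu0 muL. Qed.
Let c0 : 0 < em_c. Proof. by rewrite divr_gt0 // mulr_gt0. Qed.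
Let c8 : em_c <= 1 / 8.
Proof. by rewrite ler_pdivrMr ?mulr_gt0 //; have := muL; lra. Qed.
Let c1 : 0 < 1 + em_c. Proof. by rewrite addr_gt0. Qed.

Let tauL : em_tau mu em_c * L <= 1 / 4.
Proof.
have -> : em_tau mu em_c * L = 1 / (4 * (1 + em_c)).
  rewrite /em_tau /em_alpha /em_c; field.
  by rewrite !lt0r_neq0 ?addr_gt0 ?mulr_gt0 ?divr_gt0.
by rewrite ler_pdivrMr ?mulr_gt0 //; have := c0; lra.
Qed.

Local Notation T s k :=
  (em_traj Fhat Proj (em_alpha mu em_c) (em_gamma em_c) (em_tau mu em_c) z0 s k).
Local Notation V := (em_lyap F zs mu em_c).

Lemma monotone_lipschitz_sqnorm (z z' : vec) : Z z -> Z z' ->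
  mu * sqnorm (z - z') <= dotv (F z - F z') (z - z') /\
  sqnorm (F z - F z') <= L ^+ 2 * sqnorm (z - z').
Proof.
move=> Zz Zz'; split; first by rewrite -enorm_sqr smF.
have := lipF Zz Zz'; have := enorm_ge0 (F z - F z'); have := enorm_ge0 (z - z').
by rewrite -!enorm_sqr; have := L0; nra.
Qed.

Lemma em_lyap_step_proj (z zp g gp : vec) : Z z -> Z zp ->
  (1 + em_c) * V (Proj (z - em_alpha mu em_c *: g + em_gamma em_c *: (z - zp)
                        - em_tau mu em_c *: (g - gp))) z g
  <= V z zp gp - (em_beta em_c + em_c) * sqnorm (z - zs)
     - 2 * em_tau mu em_c * dotv (g - F z) (z - zs) + em_err_gain mu em_c * sqnorm (g - F z).
Proof.
move=> Zz Zzp.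
set y := z - _ + _ - _.
have Zy := (projP y).1.
have [Zzs solVI] := solzs.
have [sm_z lip_z] := monotone_lipschitz_sqnorm Zz Zzp.
have [sm_y _] := monotone_lipschitz_sqnorm Zy Zzs.
have proj_y : 0 <= dotv (y - Proj y) (Proj y - zs).
  by have := proj_obtuse y cvxZ projP Zzs; rewrite -[zs - _]opprB dotvNr oppr_le0.
exact: (em_lyap_step mu0 c0 c8 L0 tauL (z := z) (zp := zp) (g := g) (gp := gp))
  proj_y (solVI _ Zy) sm_y sm_z lip_z.
Qed.

Lemma em_traj_in_Z s j : Z (T s j).1 /\ Z (T s j).2.
Proof. exact: em_traj_in. Qed.

(** Only meaningful for 0 < j: at j = 0 the sample s j.-1 = s 0 is junk. *)
Definition lyap_at (s : nat -> Xi) j := V (T s j).1 (T s j).2 (Fhat (T s j).2 (s j.-1)).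

Lemma lyap_at_lower s j : (0 < j)%N ->
  (5 / 8 + em_beta em_c) * sqnorm ((T s j).1 - zs) <= lyap_at s j.
Proof.
move=> j0; have [Zz Zzp] := em_traj_in_Z s j.
have [sm_z lip_z] := monotone_lipschitz_sqnorm Zz Zzp.
exact: (em_lyap_lower zs mu0 c0 L0 tauL _ sm_z lip_z).
Qed.

Lemma lyap_at_gap s j : (0 < j)%N ->
  0 <= lyap_at s j - (em_beta em_c + em_c) * sqnorm ((T s j).1 - zs).
Proof.
move=> j0; have := lyap_at_lower s j0; have := sqnorm_ge0 ((T s j).1 - zs).
by have := c8; rewrite subr_ge0; nra.
Qed.

Lemma lyap_at_ge0 s j : (0 < j)%N -> 0 <= lyap_at s j.
Proof.
move=> j0; apply: le_trans (lyap_at_gap s j0) _.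
by rewrite lerBlDr lerDl mulr_ge0 ?sqnorm_ge0 ?addr_ge0 ?em_beta_ge0 ?ltW.
Qed.

Lemma lyap_at_step s j x : (0 < j)%N ->
  (1 + em_c) * lyap_at (upd s j x) j.+1 <=
    lyap_at s j - (em_beta em_c + em_c) * sqnorm ((T s j).1 - zs)
    + 2 * em_tau mu em_c * enorm ((T s j).1 - zs) * enorm (Fhat (T s j).1 x - F (T s j).1)
    + em_err_gain mu em_c * enorm (Fhat (T s j).1 x - F (T s j).1) ^+ 2.
Proof.
case: j => [//|j] _.
have Tj : T (upd s j.+1 x) j.+1 = T s j.+1.
  by apply: em_traj_prefix => i ij; rewrite /upd ltn_eqF.
have [Zz Zzp] := em_traj_in_Z s j.+1.
rewrite /lyap_at em_traj_fstSS Tj (em_traj_snd _ j.+1) Tj /upd eqxx ltn_eqF //.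
move: Zz Zzp; case: (T s j.+1) => z zp /= Zz Zzp.
apply: le_trans (em_lyap_step_proj _ _ Zz Zzp) _.
have tau0 := em_tau_ge0 mu0 c0.
have := dotv_le_enormM (Fhat z x - F z) (- (z - zs)); rewrite dotvNr enormN => cs.
by rewrite enorm_sqr lerD2r lerD2l; nra.
Qed.

Lemma lyap_at_1 s x :
  (1 + em_c) * lyap_at (upd s 0 x) 1 <=
    (1 - em_c) * sqnorm (z0 - zs)
    + (em_err_gain mu em_c + em_err_weight mu em_c) * enorm (Fhat z0 x - F z0) ^+ 2.
Proof.
rewrite /lyap_at /= /upd eqxx.
by apply: le_trans (em_lyap_step_proj _ _ Zz0 Zz0) _; rewrite em_lyap_diag // enorm_sqr.
Qed.

Definition em_rate := (1 + em_c)^-1.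
Definition em_noise := em_err_gain mu em_c * sigma ^+ 2
  + em_tau mu em_c ^+ 2 * delta ^+ 2 / (em_beta em_c + em_c).
(** em_noise * (lambda + ... + lambda^(K-j)) in closed form, lambda = em_rate. *)
Definition noise_acc (K j : nat) := em_noise / em_c * (1 - em_rate ^+ (K - j)).
(** Bounds E |z_K - zs|^2 given the first j samples. *)
Definition potential (K j : nat) (s : nat -> Xi) : \bar R :=
  ((em_rate ^+ (K - j) * lyap_at s j + noise_acc K j) / (5 / 8))%:E.

Let rate0 : 0 < em_rate. Proof. by rewrite invr_gt0. Qed.
Let rateM : em_rate * (1 + em_c) = 1. Proof. by rewrite mulVf // lt0r_neq0. Qed.
Let rateX_ge0 p : 0 <= em_rate ^+ p. Proof. by rewrite exprn_ge0 ?ltW. Qed.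

Let rateX_le1 p : em_rate ^+ p <= 1.
Proof. by apply: exprn_ile1; [exact: ltW | rewrite invf_le1 // lerDl ltW]. Qed.

Lemma noise_acc_ge0 K j : 0 <= noise_acc K j.
Proof.
have noise0 : 0 <= em_noise.
  apply: addr_ge0; first by rewrite mulr_ge0 ?sqr_ge0 ?em_err_gain_ge0.
  apply: divr_ge0; first by rewrite mulr_ge0 ?sqr_ge0.
  by rewrite addr_ge0 ?em_beta_ge0 // ltW.
by apply: mulr_ge0; rewrite ?subr_ge0 ?rateX_le1 // divr_ge0 // ltW.
Qed.

Lemma potential_ge0 K j s : (0 < j)%N -> (0 <= potential K j s)%E.
Proof.
move=> j0; rewrite lee_fin divr_ge0 // addr_ge0 ?noise_acc_ge0 //.
by rewrite mulr_ge0 ?lyap_at_ge0.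
Qed.

Lemma noise_accS K j : (j < K)%N -> noise_acc K j = noise_acc K j.+1 + em_noise * em_rate ^+ (K - j).
Proof.
move=> jK; rewrite /noise_acc -(subnSK jK) exprS /em_rate; field.
by rewrite !lt0r_neq0.
Qed.

Lemma integral_potential_le K j s : (0 < j)%N -> (j < K)%N ->
  (\int[Pr]_x potential K j.+1 (upd s j x) <= potential K j s)%E.
Proof.
move=> j0 jK.
have [Zz _] := em_traj_in_Z s j.
pose z := (T s j).1; pose err x := enorm (Fhat z x - F z).
pose q := em_rate ^+ (K - j); pose bc := em_beta em_c + em_c.
have q0 : 0 <= q := rateX_ge0 _.
have qS : em_rate ^+ (K - j.+1) * em_rate = q by rewrite /q -(subnSK jK) exprSr.
pose a := (q * (lyap_at s j - bc * sqnorm (z - zs)) + noise_acc K j.+1) / (5 / 8).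
pose b := q * (2 * em_tau mu em_c * enorm (z - zs)) / (5 / 8).
pose c := q * em_err_gain mu em_c / (5 / 8).
have pointwise x : (potential K j.+1 (upd s j x) <= (a + b * err x + c * err x ^+ 2)%:E)%E.
  rewrite lee_fin.
  have := ler_wpM2l (ltW rate0) (lyap_at_step s x j0); rewrite mulrA rateM mul1r => step.
  apply: le_trans (_ : (em_rate ^+ (K - j.+1) * (em_rate * (lyap_at s j - bc * sqnorm (z - zs)
       + 2 * em_tau mu em_c * enorm (z - zs) * err x + em_err_gain mu em_c * err x ^+ 2))
       + noise_acc K j.+1) / (5 / 8) <= _).
    by rewrite ler_pM2r // lerD2r ler_wpM2l.
  by rewrite le_eqVlt /a /b /c -qS; apply/orP; left; apply/eqP; field.
apply: le_trans (ge0_le_integral_nonmeasurable (fun x => potential_ge0 K (upd s j x) (ltn0Sn j))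
  pointwise) _.
apply: le_trans (integral_quadratic_le _ _ _ _ _ (int_err Zz) (int_err2 Zz)) _.
- exact: measurable_oracle_error.
- by move=> x; exact: enorm_ge0.
- by rewrite /a divr_ge0 // addr_ge0 ?noise_acc_ge0 // mulr_ge0 ?lyap_at_gap.
- apply: divr_ge0 => //; apply: mulr_ge0 => //.
  by rewrite mulr_ge0 ?enorm_ge0 // mulr_ge0 // em_tau_ge0.
- by apply: divr_ge0 => //; apply: mulr_ge0 => //; exact: em_err_gain_ge0.
rewrite lee_fin (noise_accS jK) -/q.
have young : - (bc * sqnorm (z - zs)) + 2 * em_tau mu em_c * enorm (z - zs) * delta
    + em_err_gain mu em_c * sigma ^+ 2 <= em_noise.
  rewrite /em_noise addrC lerD2l -enorm_sqr young_sqr //.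
  by rewrite ltr_wpDl ?em_beta_ge0.
have -> : a + b * delta + c * sigma ^+ 2 = (q * lyap_at s j + noise_acc K j.+1
    + q * (- (bc * sqnorm (z - zs)) + 2 * em_tau mu em_c * enorm (z - zs) * delta
           + em_err_gain mu em_c * sigma ^+ 2)) / (5 / 8) by rewrite /a /b /c; field.
by rewrite ler_pM2r // addrA (mulrC em_noise) lerD2l ler_wpM2l.
Qed.

Definition potential_init K := (em_rate ^+ K * ((1 - em_c) * sqnorm (z0 - zs)
  + (em_err_gain mu em_c + em_err_weight mu em_c) * sigma ^+ 2) + noise_acc K 1) / (5 / 8).

Lemma iexp1_potential_le K s : (0 < K)%N -> (iexp Pr 1 (potential K 1) s <= (potential_init K)%:E)%E.
Proof.
move=> K0 /=.
pose err x := enorm (Fhat z0 x - F z0).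
pose q := em_rate ^+ K.
have q0 : 0 <= q := rateX_ge0 _.
have qS : em_rate ^+ (K - 1) * em_rate = q by rewrite /q -exprSr subn1 prednK.
pose a := (q * ((1 - em_c) * sqnorm (z0 - zs)) + noise_acc K 1) / (5 / 8).
pose c := q * (em_err_gain mu em_c + em_err_weight mu em_c) / (5 / 8).
have pointwise x : (potential K 1 (upd s 0 x) <= (a + 0 * err x + c * err x ^+ 2)%:E)%E.
  rewrite lee_fin.
  have := ler_wpM2l (ltW rate0) (lyap_at_1 s x); rewrite mulrA rateM mul1r => step.
  apply: le_trans (_ : (em_rate ^+ (K - 1) * (em_rate * ((1 - em_c) * sqnorm (z0 - zs)
       + (em_err_gain mu em_c + em_err_weight mu em_c) * err x ^+ 2)) + noise_acc K 1) / (5 / 8)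
       <= _).
    by rewrite ler_pM2r // lerD2r ler_wpM2l.
  by rewrite le_eqVlt /a /c -qS; apply/orP; left; apply/eqP; field.
apply: le_trans (ge0_le_integral_nonmeasurable (fun x => potential_ge0 K (upd s 0 x) (ltn0Sn 0))
  pointwise) _.
apply: le_trans (integral_quadratic_le _ _ _ _ _ (int_err Zz0) (int_err2 Zz0)) _.
- exact: measurable_oracle_error.
- by move=> x; exact: enorm_ge0.
- by rewrite /a divr_ge0 // addr_ge0 ?noise_acc_ge0 // !mulr_ge0 ?sqnorm_ge0 // subr_ge0; have := c8; lra.
- by [].
- apply: divr_ge0 => //; apply: mulr_ge0 => //.
  by rewrite addr_ge0 ?em_err_gain_ge0 ?em_err_weight_ge0.
by rewrite lee_fin le_eqVlt /a /c /potential_init -/q; apply/orP; left; apply/eqP; field.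
Qed.

Lemma iexp_potential_le K : (0 < K)%N -> forall j, (0 < j)%N -> (j <= K)%N -> forall s,
  (iexp Pr j (potential K j) s <= (potential_init K)%:E)%E.
Proof.
move=> K0; elim=> [//|[|j] IH] _ jK s; first exact: iexp1_potential_le.
rewrite iexpS; apply: le_trans (IH isT (ltnW jK) s).
apply: le_iexp => s'; first by apply: integral_ge0 => x _; apply: potential_ge0.
exact: integral_potential_le.
Qed.

Lemma iexp_sqdist_le K s : (0 < K)%N ->
  (iexp Pr K (fun s' => (enorm ((T s' K).1 - zs) ^+ 2)%:E) s <= (potential_init K)%:E)%E.
Proof.
move=> K0; apply: le_trans (iexp_potential_le K0 K0 (leqnn K) s).
apply: le_iexp => s'; first by rewrite lee_fin sqr_ge0.
rewrite lee_fin /potential /noise_acc subnn !expr0 mul1r subrr mulr0 addr0.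
rewrite ler_pdivlMr // enorm_sqr.
have := lyap_at_lower s' K0; have := em_beta_ge0 c0; have := sqnorm_ge0 ((T s' K).1 - zs).
by nra.
Qed.

Lemma potential_init_le K :
  potential_init K.+1 <= 2 * em_rate ^+ K.+1 * enorm (z0 - zs) ^+ 2
    + 128 * sigma ^+ 2 / (mu * (8 * L + mu)) + 4 * delta ^+ 2 / mu ^+ 2.
Proof.
have -> : 128 * sigma ^+ 2 / (mu * (8 * L + mu))
    = 128 * em_c * sigma ^+ 2 / (mu ^+ 2 * (1 + em_c)).
  by rewrite /em_c; field; rewrite !lt0r_neq0 ?addr_gt0 ?mulr_gt0 ?divr_gt0.
have rateK : em_rate ^+ K = em_rate ^+ K.+1 * (1 + em_c) by rewrite exprS mulrAC rateM mul1r.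
rewrite /potential_init /noise_acc /em_noise subn1 /= rateK enorm_sqr.
exact: (em_constants_le mu0 c0 sigma delta c8 (rateX_ge0 _) (sqnorm_ge0 _)).
Qed.

Lemma iexp_sqdist_bound k s :
  (iexp Pr k (fun s' => (enorm ((T s' k).1 - zs) ^+ 2)%:E) s <=
   (2 * em_rate ^+ k * enorm (z0 - zs) ^+ 2
    + 128 * sigma ^+ 2 / (mu * (8 * L + mu)) + 4 * delta ^+ 2 / mu ^+ 2)%:E)%E.
Proof.
case: k => [|k]; last first.
  apply: le_trans (iexp_sqdist_le s (ltn0Sn k)) _.
  by rewrite lee_fin potential_init_le.
have bias0 : 0 <= 4 * delta ^+ 2 / mu ^+ 2.
  by apply: divr_ge0; [apply: mulr_ge0 => //|]; exact: sqr_ge0.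
have var0 : 0 <= 128 * sigma ^+ 2 / (mu * (8 * L + mu)).
  apply: divr_ge0; first by apply: mulr_ge0 => //; exact: sqr_ge0.
  by apply/ltW/mulr_gt0 => //; apply: addr_gt0 => //; apply: mulr_gt0.
rewrite /= lee_fin expr0 mulr1; have := sqr_ge0 (enorm (z0 - zs)).
by move: var0 bias0; lra.
Qed.

Lemma em_parameters :
  [/\ 1 / (4 * L) = em_alpha mu em_c,
      1 / (4 * L) / (1 + 1 / 8 / (L / mu)) = em_tau mu em_c,
      1 / (8 * (L / mu + 1 / 8)) = em_gamma em_c
    & 1 - 1 / (8 * (L / mu) + 1) = em_rate].
Proof.
by split; rewrite /em_tau /em_alpha /em_gamma /em_rate /em_c; field;
  rewrite !lt0r_neq0 ?addr_gt0 ?mulr_gt0 ?divr_gt0.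
Qed.

End Main.

Theorem proposition2 (R : realType) (n : nat) (Z : set 'rV[R]_n)
  (F : 'rV[R]_n -> 'rV[R]_n) (mu L : R)
  (d : measure_display) (Xi : measurableType d) (Pr : probability Xi R)
  (Fhat : 'rV[R]_n -> Xi -> 'rV[R]_n) (delta sigma : R)
  (Proj : 'rV[R]_n -> 'rV[R]_n) (zs z0 : 'rV[R]_n) :
  Z !=set0 -> eclosed Z -> em_convex_set Z ->
  0 < mu -> mu <= L ->
  em_strongly_monotone Z F mu -> em_lipschitz_on Z F L ->
  is_VI_sol Z F zs ->
  em_is_proj Z Proj ->
  oracle_measurable Fhat ->
  0 <= delta -> 0 <= sigma ->
  (forall z, Z z -> (\int[Pr]_x (enorm (Fhat z x - F z))%:E <= delta%:E)%E) ->
  (forall z, Z z -> (\int[Pr]_x (enorm (Fhat z x - F z) ^+ 2)%:E <= (sigma ^+ 2)%:E)%E) ->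
  Z z0 ->
  let kappa := L / mu in
  let theta := 1 / 8 : R in
  let alpha := 1 / (4 * L) in
  let tau := alpha / (1 + theta / kappa) in
  let gamma := 1 / (8 * (kappa + theta)) in
  forall (k : nat) (s : nat -> Xi),
    (iexp Pr k
       (fun s' => (enorm (em_iter Fhat Proj alpha gamma tau z0 s' k - zs) ^+ 2)%:E) s
     <= (2 * (1 - 1 / (8 * kappa + 1)) ^+ k * enorm (z0 - zs) ^+ 2
         + 128 * sigma ^+ 2 / (mu * (8 * L + mu)) + 4 * delta ^+ 2 / mu ^+ 2)%:E)%E.
Proof.
move=> _ _ cvxZ mu0 muL smF lipF solzs projP measFhat _ _ int_err int_err2 Zz0.
move=> kappa theta alpha tau gamma k s.
have [alphaE tauE gammaE rateE] := em_parameters mu0 muL.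
rewrite /tau /alpha /gamma /theta /kappa tauE alphaE gammaE rateE.
exact: iexp_sqdist_bound cvxZ mu0 muL smF lipF solzs projP measFhat int_err int_err2 Zz0 k s.
Qed.
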